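(* Let $f$ satisfy conditions (1) and (2b), and let $n\in\mathbb{N}_0$. In the expression \[ 2\pi\int_0^\infty f(r)\,r^{n+1}\sum_{k=0}^\infty(-1)^k\frac{(pr^2)^k}{k!}\,dr \] the order of summation and integration may be reversed, for arbitrary $p\ge0$.
   Context: $f:[0,\infty)\to\mathbb{R}$; $c_n=2\pi\int_0^\infty f(r)\,r^{n+1}dr$. Condition (1): there is a constant $F$ with $0\le f(r)\le F$ for all $r\ge0$, $c_0$ exists and $c_0>0$. Condition (2b): $c_{2n}$ exists for all $n\in\mathbb{N}_0$ and $c_n^{1/n}=o(n^{1/2})$ as $n\to\infty$. *)

From HB Require Import structures.
From mathcomp Require Import all_boot all_order all_algebra.
From mathcomp Require Import all_classical all_reals all_analysis.
Set Implicit Arguments. Unset Strict Implicit. Unset Printing Implicit Defensive.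
Import Order.TTheory GRing.Theory Num.Theory.
Import numFieldNormedType.Exports.
Local Open Scope classical_set_scope.
Local Open Scope ring_scope.

(* f : [0,oo) -> R is modelled as f : R -> R,
   only its values on [0, +oo[ matter. *)

Section Defs.
Variable R : realType.

Definition cexists (f : R -> R) (n : nat) : Prop :=
  (@lebesgue_measure R).-integrable `[0%R, +oo[%classic
     (fun r => (f r * r ^+ n.+1)%:E).

Definition cmom (f : R -> R) (n : nat) : R :=
  2 * pi * Rintegral (@lebesgue_measure R) `[0%R, +oo[%classic
     (fun r => f r * r ^+ n.+1).

Definition cond1 (f : R -> R) : Prop :=
  (exists F : R, forall r : R, 0 <= r -> 0 <= f r <= F) /\
  cexists f 0 /\ 0 < cmom f 0.

Definition cond2b (f : R -> R) : Prop :=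
  (forall n : nat, cexists f (2 * n)) /\
  (fun n : nat => cmom f n `^ (n%:R)^-1) =o_\oo (fun n : nat => Num.sqrt (n%:R : R)).

Definition expterm (p r : R) (k : nat) : R :=
  (-1) ^+ k * (p * r ^+ 2) ^+ k / (k`!)%:R.
End Defs.

From HB Require Import structures.
From mathcomp Require Import all_boot all_order all_algebra.
From mathcomp Require Import all_classical all_reals all_analysis.
From mathcomp Require Import measurable_realfun ring.
Import Order.TTheory GRing.Theory Num.Theory.
Import numFieldNormedType.Exports.
Local Open Scope classical_set_scope.
Local Open Scope ring_scope.

(* The absolute values of the terms of the series sum to exp (p r^2), so its
   partial sums are dominated by f(r) r^(n+1) exp (p r^2), and dominated
   convergence allows termwise integration once this majorant is integrable.
   Since r^(n+1) <= r + r^(2n+1) on [0, oo), odd powers suffice; expanding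
   exp (p r^2) once more, monotone convergence gives
     2 pi \int_0^oo f(r) r^(2n+1) exp (p r^2) dr = \sum_k p^k / k! c_(2(n+k)).
   Condition (2b) yields c_(2j) <= (eps^2 2j)^j for large j, and with
   j^k / k! <= e^j and j^n <= n! e^j the k-th term is at most
   n! (2 (1 + p) e^2 eps^2)^(n+k), a geometric bound once eps is small. *)

Section real_estimates.
Context {R : realType}.
Implicit Types (x p c a : R).

Lemma series_exp_coeff_le_expR x N : 0 <= x -> series (exp_coeff x) N <= expR x.
Proof.
move=> x0; apply: nondecreasing_cvgn_le; last exact: is_cvg_series_exp_coeff.
by apply: nondecreasing_series => k _ _; exact: exp_coeff_ge0.
Qed.

Lemma exp_coeff_le_expR x k : 0 <= x -> exp_coeff x k <= expR x.
Proof.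
move=> x0; apply: le_trans (series_exp_coeff_le_expR _ k.+1 x0).
rewrite /series /= big_nat_recr //= lerDr.
by apply: sumr_ge0 => i _; exact: exp_coeff_ge0.
Qed.

Lemma cvg_series_scale_exp_coeff a x :
  series (fun k => a * exp_coeff x k) @ \oo --> a * expR x.
Proof.
rewrite (_ : series _ = fun N => a * series (exp_coeff x) N).
  exact: cvgMl_tmp (is_cvg_series_exp_coeff x).
by apply/funext => N; rewrite /series /= mulr_sumr.
Qed.

Lemma expr_le_addX x i j k : 0 <= x -> (i <= j <= k)%N ->
  x ^+ j <= x ^+ i + x ^+ k.
Proof.
move=> x0 /andP[ij jk]; have [x1|x1] := leP x 1.
- by rewrite (le_trans (ler_wiXn2l x0 x1 ij)) // lerDl exprn_ge0.
- by rewrite (le_trans (ler_weXn2l (ltW x1) jk)) // lerDr exprn_ge0.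
Qed.

Lemma powR_inv_le_expr c a m : 0 <= c -> (0 < m)%N ->
  c `^ m%:R^-1 <= a -> c <= a ^+ m.
Proof.
move=> c0 m0 ca; have m0' : m%:R != 0 :> R by rewrite pnatr_eq0 -lt0n.
have -> : c = (c `^ m%:R^-1) ^+ m.
  by rewrite -powR_mulrn ?powR_ge0 // -powRrM mulVf // powRr1.
by rewrite lerXn2r // nnegrE ?powR_ge0 // (le_trans _ ca) // powR_ge0.
Qed.

Lemma exp_coeff_pow_self_le p n k : 0 <= p ->
  exp_coeff p k * (2 * (n + k))%:R ^+ (n + k)
    <= n`!%:R * (2 * (1 + p) * expR 1 ^+ 2) ^+ (n + k).
Proof.
move=> p0; rewrite /exp_coeff /=; set j := (n + k)%N; set e := expR 1.
have jm m : (j%:R : R) ^+ m / m`!%:R <= e ^+ j.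
  by rewrite /e -expRM_natl mulr1; exact: (exp_coeff_le_expR _ m (ler0n _ j)).
have jn : (j%:R : R) ^+ n <= n`!%:R * e ^+ j.
  by rewrite mulrC -ler_pdivrMr ?ltr0n ?fact_gt0 // jm.
have pk : p ^+ k <= (1 + p) ^+ j.
  apply: (@le_trans _ _ ((1 + p) ^+ k)).
    by rewrite lerXn2r ?nnegrE ?addr_ge0 // lerDr.
  by rewrite ler_weXn2l ?lerDl // leq_addl.
have -> : ((2 * j)%:R : R) ^+ j = 2 ^+ j * (j%:R ^+ k * j%:R ^+ n).
  by rewrite natrM exprMn -exprD addnC.
have -> : (2 * (1 + p) * e ^+ 2) ^+ j =
          2 ^+ j * ((1 + p) ^+ j * e ^+ j * e ^+ j).
  by rewrite !exprMn !mulrA.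
rewrite mulrCA [leRHS]mulrCA ler_wpM2l ?exprn_ge0 //.
have -> : p ^+ k / k`!%:R * (j%:R ^+ k * j%:R ^+ n) =
          p ^+ k * (j%:R ^+ k / k`!%:R) * j%:R ^+ n by ring.
have -> : n`!%:R * ((1 + p) ^+ j * e ^+ j * e ^+ j) =
          (1 + p) ^+ j * e ^+ j * (n`!%:R * e ^+ j) by ring.
by rewrite !ler_pM ?mulr_ge0 ?divr_ge0 ?exprn_ge0.
Qed.
End real_estimates.

Lemma series_le_cvg_near (R : realType) (u v : R ^nat) :
  (forall k, 0 <= u k) -> (\forall k \near \oo, u k <= v k) ->
  cvgn (series v) -> cvgn (series u).
Proof.
move=> u0 [N _ uv] cv.
pose w k := if (k < N)%N then u k else v k.
apply: (@series_le_cvg _ u w u0).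
- by move=> k; rewrite /w; case: ltnP => // /uv; exact: le_trans.
- by move=> k; rewrite /w; case: ltnP => // /uv.
rewrite -(is_cvg_series_restrict N).
rewrite (_ : (fun n => _) = fun n => \sum_(N <= k < n) v k).
  by rewrite is_cvg_series_restrict.
apply/funext => n; apply: eq_big_nat => k /andP[Nk _].
by rewrite /w ltnNge Nk.
Qed.

Lemma eseries_EFin (R : realType) (u : R ^nat) (l : R) :
  series u @ \oo --> l -> (\sum_(k <oo) (u k)%:E)%E = l%:E.
Proof.
move=> ul; rewrite (_ : (fun N => _) = EFin \o series u).
  by rewrite EFin_lim ?(cvg_lim _ ul) //; apply/cvg_ex; exists l.
by apply/funext => N /=; rewrite sumEFin.
Qed.

Section termwise_integration.
Context {d} {T : measurableType d} {R : realType}.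
Context {mu : {measure set T -> \bar R}} {D : set T} (mD : measurable D).
Context {u : nat -> T -> R} {s h : T -> R}.
Hypothesis iu : forall k, mu.-integrable D (EFin \o u k).
Hypothesis ih : mu.-integrable D (EFin \o h).
Hypothesis uh : forall N x, D x -> `|series (u ^~ x) N| <= h x.
Hypothesis us : forall x, D x -> series (u ^~ x) @ \oo --> s x.

Let measurable_u k : measurable_fun D (u k).
Proof. exact/measurable_EFinP/(measurable_int _ (iu k)). Qed.

Let mseries N : measurable_fun D (fun x => series (u ^~ x) N).
Proof. exact: measurable_sum. Qed.

Let cvg_partial_sums x : D x ->
  (fun N => (series (u ^~ x) N)%:E) @ \oo --> (s x)%:E.
Proof. by move=> Dx; apply: cvg_EFin; [exact: nearW | exact: us]. Qed.

Let dominated := dominated_convergence mD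
  (fun N => (measurable_EFinP _ _).2 (mseries N))
  ((measurable_EFinP _ _).2 (measurable_fun_cvg mseries us))
  (aeW _ cvg_partial_sums) ih (aeW _ (fun x N Dx => uh N x Dx)).

Lemma integrable_series_lim : mu.-integrable D (EFin \o s).
Proof. by case: dominated. Qed.

Lemma cvg_series_Rintegral :
  series (fun k => \int[mu]_(x in D) u k x) @ \oo --> \int[mu]_(x in D) s x.
Proof.
have [si _ cvgI] := dominated.
have -> : series (fun k => \int[mu]_(x in D) u k x) =
    fine \o (fun N => \int[mu]_(x in D) (series (u ^~ x) N)%:E)%E.
  apply/funext => N /=; rewrite /series /=.
  under eq_integral do rewrite -sumEFin.
  rewrite integral_sum //.
  rewrite (eq_bigr (fun k => (\int[mu]_(x in D) u k x)%:E)) ?sumEFin // => k _.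
  by rewrite fineK // (integrable_fin_num mD (iu k)).
apply: fine_cvg; rewrite fineK //; exact: integrable_fin_num.
Qed.

End termwise_integration.

Section expterm.
Context {R : realType}.
Implicit Types p r : R.

Lemma exptermE p r k : expterm p r k = exp_coeff (- (p * r ^+ 2)) k.
Proof. by rewrite /expterm /= -exprNn. Qed.

Lemma norm_expterm p r k : 0 <= p ->
  `|expterm p r k| = exp_coeff (p * r ^+ 2) k.
Proof.
move=> p0; rewrite exptermE /= normrM normrX normrN normfV.
by rewrite !ger0_norm // mulr_ge0 // sqr_ge0.
Qed.

Lemma limn_series_expterm p r :
  limn (series (expterm p r)) = expR (- (p * r ^+ 2)).
Proof.
rewrite (_ : expterm p r = exp_coeff (- (p * r ^+ 2))) //.
by apply/funext => k; exact: exptermE.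
Qed.
End expterm.

Section moments.
Context {R : realType}.
Local Notation mu := (@lebesgue_measure R).
Local Notation T := (measurableTypeR R).
Local Notation D := (`[0%R, +oo[%classic : set T).
Context {f : R -> R}.
Hypotheses (f1 : cond1 f) (f2b : cond2b f).

Let mD : measurable D. Proof. exact: measurable_itv. Qed.

Let D_ge0 r : D r -> 0 <= r.
Proof. by rewrite /= in_itv /= andbT. Qed.

Let f_ge0 r : D r -> 0 <= f r.
Proof. by move=> /D_ge0; have [[F hF] _] := f1; move=> /hF /andP[]. Qed.

Lemma moment_ge0 m r : D r -> 0 <= f r * r ^+ m.
Proof. by move=> Dr; rewrite mulr_ge0 ?exprn_ge0 ?f_ge0 ?(D_ge0 _ Dr). Qed.

Lemma cmom_ge0 m : 0 <= cmom f m.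
Proof.
rewrite /cmom mulr_ge0 ?mulr_ge0 ?pi_ge0 //.
by apply: Rintegral_ge0 => r /moment_ge0.
Qed.

Let measurable_sqr_scale a : measurable_fun D (fun r => a * r ^+ 2).
Proof. by apply: measurable_funM => //; exact: measurable_funX. Qed.

Lemma measurable_moment m q : measurable_fun D q ->
  measurable_fun D (fun r => f r * r ^+ m.+1 * q r).
Proof.
(* Only [f r * r] is known to be measurable, through the existence of c_0. *)
move=> mq; have [_ [/measurable_int /measurable_EFinP mf1 _]] := f1.
rewrite (_ : (fun r => _) = fun r => f r * r ^+ 1 * (r ^+ m * q r)).
  by apply: measurable_funM mf1 (measurable_funM (measurable_funX _ _) mq).
by apply/funext => r; rewrite exprS expr1; ring.
Qed.

Lemma cmom_even_le eps : 0 < eps ->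
  \forall j \near \oo, cmom f (2 * j) <= (eps ^+ 2 * (2 * j)%:R) ^+ j.
Proof.
move=> eps0; have [_ /eqoP /(_ eps eps0) [N _ HN]] := f2b.
exists N.+1 => // j /= Nj.
have j0 : (0 < 2 * j)%N by rewrite muln_gt0 (leq_trans _ Nj).
have /HN : (N <= 2 * j)%N.
  by rewrite (leq_trans (leqnSn N)) // (leq_trans Nj) // leq_pmull.
rewrite /= ger0_norm ?powR_ge0 // ger0_norm ?sqrtr_ge0 //.
move=> /(powR_inv_le_expr _ _ _ (cmom_ge0 _) j0).
by rewrite exprMn !exprM sqr_sqrtr // -exprMn.
Qed.

Lemma cvg_series_moments n p : 0 <= p ->
  cvgn (series (fun k => exp_coeff p k * cmom f (2 * (n + k)))).
Proof.
move=> p0; set e := expR 1 : R.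
have e0 : 0 < e := expR_gt0 1.
have p1 : 0 < 1 + p by rewrite ltr_pwDl.
pose eps := (2 * e * (1 + p))^-1.
have eps0 : 0 < eps by rewrite invr_gt0 !mulr_gt0.
have rate : 2 * (1 + p) * e ^+ 2 * eps ^+ 2 = (2 * (1 + p))^-1.
  by rewrite /eps; field; rewrite !gt_eqF.
have rate_le : (2 * (1 + p))^-1 <= 2^-1 :> R.
  by rewrite lef_pV2 ?posrE ?mulr_gt0 // ler_peMr // lerDl.
apply: (@series_le_cvg_near _ _ (geometric n`!%:R 2^-1)).
- by move=> k; rewrite mulr_ge0 ?exp_coeff_ge0 ?cmom_ge0.
- have [N _ HN] := cmom_even_le _ eps0.
  exists N => // k /= Nk; set j := (n + k)%N.
  have /(ler_wpM2l (exp_coeff_ge0 k p0)) := HN j (leq_trans Nk (leq_addl n k)).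
  move=> /le_trans; apply; rewrite exprMn mulrCA.
  have := exp_coeff_pow_self_le p n k p0; rewrite -/j.
  move=> /(ler_wpM2l (exprn_ge0 j (sqr_ge0 eps))) /le_trans; apply.
  rewrite mulrCA -exprMn [eps ^+ 2 * _]mulrC rate ler_wpM2l //.
  apply: (@le_trans _ _ (2^-1 ^+ j)).
    by rewrite lerXn2r // nnegrE ?invr_ge0 ?mulr_ge0 ?ltW.
  by apply: ler_wiXn2l; rewrite ?invr_ge0 ?invf_le1 ?ler1n // leq_addl.
- by apply: is_cvg_geometric_series; rewrite ger0_norm ?invf_lt1 ?ltr1n.
Qed.

Let measurable_exp_coeff_sqr a k :
  measurable_fun D (fun r => exp_coeff (a * r ^+ 2) k).
Proof. by apply: measurable_funM => //; exact: measurable_funX. Qed.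

Let measurable_moment_expR m p :
  measurable_fun D (fun r => (f r * r ^+ m.+1 * expR (p * r ^+ 2))%:E).
Proof.
apply/measurable_EFinP; apply: measurable_moment.
by apply: (@measurableT_comp _ _ _ _ _ _ expR); [exact: measurable_expR|].
Qed.

Lemma integrable_odd_moment_expR n p : 0 <= p ->
  mu.-integrable D (fun r => (f r * r ^+ (2 * n).+1 * expR (p * r ^+ 2))%:E).
Proof.
move=> p0; pose g k r := f r * r ^+ (2 * n).+1 * exp_coeff (p * r ^+ 2) k.
have g0 k r : D r -> 0 <= g k r.
  move=> Dr; rewrite mulr_ge0 ?moment_ge0 //.
  by rewrite exp_coeff_ge0 // mulr_ge0 // sqr_ge0.
have gE k r : g k r = exp_coeff p k * (f r * r ^+ (2 * (n + k)).+1).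
  by rewrite /g /exp_coeff /= exprMn -exprM mulnDr -addSn exprD; ring.
have [cexists_even _] := f2b.
have intg k : (\int[mu]_(r in D) (g k r)%:E)%E =
    ((2 * pi)^-1 * (exp_coeff p k * cmom f (2 * (n + k))))%:E.
  under eq_integral do rewrite gE EFinM.
  rewrite (integralZl mD (cexists_even (n + k)%N)) /cmom /Rintegral.
  move: (integrable_fin_num mD (cexists_even (n + k)%N)).
  case: (\int[mu]_(x in D) _)%E => [I _||] //=; congr EFin.
  by have := pi_gt0 R; move: pi => P P0; field; rewrite gt_eqF.
apply/integrableP; split; first exact: measurable_moment_expR.
rewrite (eq_integral (fun r : T => \sum_(k <oo) (g k r)%:E)%E); last first.
  move=> r /[1!inE] Dr.
  rewrite gee0_abs ?lee_fin ?(mulr_ge0 (moment_ge0 _ _ Dr)) ?expR_ge0 //.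
  exact/esym/eseries_EFin/cvg_series_scale_exp_coeff.
rewrite integral_nneseries //.
- have := is_cvg_seriesZ (k := (2 * pi)^-1) (cvg_series_moments n p p0).
  move=> /eseries_EFin; rewrite (eq_eseriesr (fun k _ => intg k)) => ->.
  exact: ltry.
- move=> k; apply/measurable_EFinP; apply: measurable_moment.
  exact: measurable_exp_coeff_sqr.
Qed.

Lemma integrable_moment_expR m p : 0 <= p ->
  mu.-integrable D (fun r => (f r * r ^+ m.+1 * expR (p * r ^+ 2))%:E).
Proof.
move=> p0; have := integrableD mD (integrable_odd_moment_expR 0%N p p0)
  (integrable_odd_moment_expR m p p0).
apply: le_integrable (measurable_moment_expR m p) _ => //.
move=> r Dr; have r0 := D_ge0 _ Dr.
rewrite /= muln0 lee_fin -mulrDl -mulrDr.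
rewrite !ger0_norm ?mulr_ge0 ?addr_ge0 ?f_ge0 ?expR_ge0 ?exprn_ge0 //.
rewrite ler_wpM2r ?expR_ge0 // ler_wpM2l ?f_ge0 //.
by rewrite expr_le_addX //= ltnS leq_pmull.
Qed.

Lemma norm_series_moment_expterm_le n p N r : 0 <= p -> D r ->
  `|series (fun k => f r * r ^+ n.+1 * expterm p r k) N|
    <= f r * r ^+ n.+1 * expR (p * r ^+ 2).
Proof.
move=> p0 Dr; have g0 := moment_ge0 n.+1 r Dr.
rewrite (le_trans (ler_norm_sum _ _ _)) //.
under eq_bigr do rewrite normrM norm_expterm // (ger0_norm g0).
rewrite -mulr_sumr ler_wpM2l //.
by apply: series_exp_coeff_le_expR; rewrite mulr_ge0 // sqr_ge0.
Qed.

Lemma integrable_moment_expterm n p k : 0 <= p ->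
  mu.-integrable D (fun r => (f r * r ^+ n.+1 * expterm p r k)%:E).
Proof.
move=> p0; apply: le_integrable (integrable_moment_expR n p p0) => //.
  apply/measurable_EFinP; apply: measurable_moment.
  rewrite (_ : (fun r => _) = fun r => exp_coeff (- p * r ^+ 2) k).
    exact: measurable_exp_coeff_sqr.
  by apply/funext => r; rewrite exptermE mulNr.
move=> r Dr /=; have g0 := moment_ge0 n.+1 r Dr.
rewrite lee_fin normrM norm_expterm // (ger0_norm g0).
rewrite ger0_norm ?(mulr_ge0 g0) ?expR_ge0 //.
by rewrite ler_wpM2l // exp_coeff_le_expR // mulr_ge0 // sqr_ge0.
Qed.
End moments.

Theorem lemma7 (R : realType) (f : R -> R) (n : nat) (p : R) :
  cond1 f -> cond2b f -> 0 <= p ->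
  let inner := fun r : R => limn (series (expterm p r)) in
  let term := fun k : nat =>
    2 * pi * Rintegral (@lebesgue_measure R) `[0%R, +oo[
      (fun r => f r * r ^+ n.+1 * expterm p r k) in
  (* the integral of the summed integrand exists *)
  (@lebesgue_measure R).-integrable `[0%R, +oo[
     (fun r => (f r * r ^+ n.+1 * inner r)%:E) /\
  (* each termwise integral exists *)
  (forall k : nat, (@lebesgue_measure R).-integrable `[0%R, +oo[
     (fun r => (f r * r ^+ n.+1 * expterm p r k)%:E)) /\
  (* the series of termwise integrals converges to the integral *)
  series term @ \oo -->
    2 * pi * Rintegral (@lebesgue_measure R) `[0%R, +oo[
      (fun r => f r * r ^+ n.+1 * inner r).
Proof.
move=> f1 f2b p0 inner term.
have mD : measurable (`[0%R, +oo[%classic : set (measurableTypeR R)).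
  exact: measurable_itv.
pose u k r := f r * r ^+ n.+1 * expterm p r k.
have iG := integrable_moment_expR f1 f2b n p p0.
have iu k := integrable_moment_expterm f1 f2b n p k p0.
have uG N r := norm_series_moment_expterm_le f1 n p N r p0.
have us x : `[0%R, +oo[%classic x ->
    series (u ^~ x) @ \oo --> f x * x ^+ n.+1 * inner x.
  move=> _; rewrite /inner limn_series_expterm.
  rewrite (_ : u ^~ x =
      fun k => f x * x ^+ n.+1 * exp_coeff (- (p * x ^+ 2)) k).
    exact: cvg_series_scale_exp_coeff.
  by apply/funext => k; rewrite /u exptermE.
split; first exact: (integrable_series_lim mD iu iG uG us).
split; first exact: iu.
rewrite (_ : series term = fun N =>
    2 * pi * series (fun k => Rintegral lebesgue_measure `[0%R, +oo[ (u k)) N).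
  exact: cvgMl_tmp (cvg_series_Rintegral mD iu iG uG us).
by apply/funext => N; rewrite /series /= mulr_sumr.
Qed.
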